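(* Let $f:\mathcal M\to\mathcal M_0$ satisfy $|f(A)|\le1$ for all $A\in\mathcal M$ and, for each $A\in\mathcal M$, either $f(A)=0$ or $f(A)_{i,j}(1-2A_{i,j})>0$ for all $i,j\in\mathbb K$. For $\varepsilon\ge0$ let $\mathcal X^\varepsilon$ be the MRN over $\Theta$ with transition cocycle $P_{\mathcal X^\varepsilon}(0,\omega)=I_k$ and $P_{\mathcal X^\varepsilon}(n,\omega)=\big(A_{n-1}+\min\{\varepsilon,1\}f(A_{n-1})\big)\cdots\big(A_0+\min\{\varepsilon,1\}f(A_0)\big)$ for $n\ge1$, $\omega=(A_z)_{z\in\mathbb Z}$. Then, up to a $\mu$-null set, $$\Omega^{(1)}:=\{q^{(1)}=0\}=\{\omega=(A_z)_{z\in\mathbb Z}: f(A_{-1})=f(A_{-2})=\dots=f(A_{-N_0^-(\omega)})=0\}.$$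
   Context: Fix $k\ge2$, $\mathbb K=\{1,\dots,k\}$, $S=\{s_1,\dots,s_k\}$, $e_1,\dots,e_k$ the canonical basis of $\mathbb R^k$; $|\cdot|$ is the $\ell^1$-induced matrix norm (max absolute column sum). $\mathcal M$ is the set of $k\times k$ matrices with entries in $\{0,1\}$ having exactly one entry $1$ in each column; $\mathcal M_0$ is the space of real $k\times k$ matrices with all column sums zero. $\nu$ is the uniform probability on $\mathcal M$, $(\Omega,\mathcal F,\mu)=\bigotimes_{z\in\mathbb Z}(\mathcal M,2^{\mathcal M},\nu)$, $\theta$ the left shift $(A_z)_z\mapsto(A_{z+1})_z$. A Markov random network (MRN) over $\Theta=(\Omega,\mathcal F,\mu,\theta)$ is a Markov process on $S\times\Omega$ moving from fibre $S\times\{\theta^n\omega\}$ to $S\times\{\theta^{n+1}\omega\}$, with transition cocycle $P(n,\omega)_{i,j}=\mathbb P\{X_n=(s_i,\theta^n\omega)\mid X_0=(s_j,\omega)\}$. $\mathcal X^0$ is the DRN with $P^0(n,\omega)=A_{n-1}\cdots A_0$; it is synchronized, with synchronization index $J:\Omega\to\mathbb K$ given by $e_{J(\omega)}=\lim_{n\to\infty}A_{-1}\cdots A_{-n}e_1$ ($\mu$-a.e.). $N_0^-(\omega)=\min\{n\in\mathbb N:\operatorname{rank}(A_{-1}A_{-2}\cdots A_{-n})=1\}$ when this set is nonempty, and $N_0^-(\omega)=1$ otherwise; it is a pull-back synchronization time, i.e. $P^0(n,\theta^{-n}\omega)e_j=e_{J(\omega)}$ for all $j$ and $n\ge N_0^-(\omega)$,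 $\mu$-a.e. Let $P^{(1)}(n,\omega)=\frac{d}{d\varepsilon}P_{\mathcal X^\varepsilon}(n,\omega)|_{\varepsilon=0}$ and, for any pull-back synchronization time $N^-$ (e.g. $N_0^-$), $q^{(1)}(\omega)=P^{(1)}(N^-(\omega),\theta^{-N^-(\omega)}\omega)\,e_{J(\theta^{-N^-(\omega)}\omega)}$ (this is $\mu$-a.e. independent of the choice of $N^-$). *)

From HB Require Import structures.
From mathcomp Require Import all_boot all_order all_algebra.
From mathcomp Require Import all_classical all_reals all_analysis.
Set Implicit Arguments. Unset Strict Implicit. Unset Printing Implicit Defensive.
Import Order.TTheory GRing.Theory Num.Theory.
Import numFieldNormedType.Exports.
Local Open Scope classical_set_scope.
Local Open Scope ring_scope.

(* The set  \mathcal M  of k x k 0/1 matrices with exactly one 1 in each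
   column is encoded by the finite type of maps g : K -> K (column j has its
   unique 1 in row g j); [mat g] is the corresponding matrix. *)
Definition Mt (k : nat) := {ffun 'I_k -> 'I_k}.
HB.instance Definition _ k := Finite.on (Mt k).
HB.instance Definition _ k := isPointed.Build (Mt k) [ffun i => i].

Definition mat {R : realType} {k : nat} (A : Mt k) : 'M[R]_k :=
  \matrix_(i, j) (i == A j)%:R.

Definition mxnorm1 {R : realType} {k : nat} (B : 'M[R]_k) : R :=
  \big[Num.max/0]_(j < k) \sum_(i < k) `|B i j|.

Definition Omega (k : nat) := int -> Mt k.

Definition coord_sets (k : nat) : set (set (Omega k)) :=
  [set C | exists (z : int) (a : Mt k), C = [set w | w z = a]].

Definition OmegaT (k : nat) := g_sigma_algebraType (@coord_sets k).

(* mu is the product of uniform probabilities nu on M: it gives to every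
   finite-dimensional cylinder its product mass (this determines mu). *)
Definition is_uniform_product {R : realType} {k : nat}
  (mu : probability (OmegaT k) R) : Prop :=
  forall (s : seq int) (a : int -> Mt k), uniq s ->
    mu [set w : OmegaT k | forall z, z \in s -> w z = a z]
    = (((#|Mt k|)%:R : R)^-1 ^+ size s)%:E.

Definition shiftn {k : nat} (m : int) (w : Omega k) : Omega k :=
  fun z => w (z + m).

Definition Peps {R : realType} {k : nat} (f : Mt k -> 'M[R]_k) (eps : R)
  (A : Mt k) : 'M[R]_k := mat A + Num.min eps 1 *: f A.

Fixpoint Pcoc {R : realType} {k : nat} (f : Mt k -> 'M[R]_k) (eps : R)
  (n : nat) (w : Omega k) : 'M[R]_k :=
  match n with
  | 0 => 1%:M
  | n'.+1 => Peps f eps (w n'%:Z) *m Pcoc f eps n' w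
  end.

(* P^(1)(n,w) = d/d eps P_{X^eps}(n,w) at eps = 0 (entrywise; right
   derivative since eps >= 0) *)
Definition P1 {R : realType} {k : nat} (f : Mt k -> 'M[R]_k) (n : nat)
  (w : Omega k) : 'M[R]_k :=
  \matrix_(i, j)
    lim ((fun h : R => (Pcoc f h n w i j - Pcoc f 0 n w i j) / h) @ 0^'+).

Fixpoint Bprod {R : realType} {k : nat} (n : nat) (w : Omega k) : 'M[R]_k :=
  match n with
  | 0 => 1%:M
  | n'.+1 => Bprod n' w *m mat (w (- (n'.+1)%:Z))
  end.

Definition evec {R : realType} {k : nat} (j : 'I_k) : 'cV[R]_k :=
  \col_i (i == j)%:R.
Definition e1 {R : realType} {k : nat} : 'cV[R]_k :=
  \col_(i < k) (val i == 0%N)%:R.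

(* e_{J(w)} = lim_n A_{-1} ... A_{-n} e_1  (limit of a sequence in the
   discrete finite set {e_1,...,e_k}: eventual value); 0 if no limit *)
Definition eJ {R : realType} {k : nat} (w : Omega k) : 'cV[R]_k :=
  xget 0 (fun v : 'cV[R]_k =>
    exists n0 : nat, forall n : nat, (n0 <= n)%N -> Bprod n w *m e1 = v).

Definition N0 {R : realType} {k : nat} (w : Omega k) : nat :=
  match pselect (exists n, (fun n => \rank (@Bprod R k n w) == 1%N) n) with
  | left h => ex_minn h
  | right _ => 1%N
  end.

Definition q1 {R : realType} {k : nat} (f : Mt k -> 'M[R]_k) (w : Omega k)
  : 'cV[R]_k :=
  let N := @N0 R k w in
  P1 f N (shiftn (- (N%:Z)) w) *m eJ (shiftn (- (N%:Z)) w).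

From HB Require Import structures.
From mathcomp Require Import all_boot all_order all_algebra.
From mathcomp Require Import all_classical all_reals all_analysis.
From mathcomp Require Import zify ring lra.
Import Order.TTheory GRing.Theory Num.Theory.
Import numFieldNormedType.Exports.
Local Open Scope classical_set_scope.
Local Open Scope ring_scope.
Set Implicit Arguments. Unset Strict Implicit. Unset Printing Implicit Defensive.

(* A map A : K -> K is identified with its 0/1 matrix [mat A], and products of
   such matrices are matrices of composed maps.  Reading backwards from time 0,
   A_{-1} ... A_{-n} is the matrix of the backward composition [bmap w n];
   N_0^-(w) is the first n for which this map is constant (rank one), and once
   a constant map occurs the pull-back limit e_{J} is a basis vector.

   The perturbed backward product [bpert c n] has an exact difference quotient
   [bder c n], polynomial in c; hence P^(1)(N, theta^{-N} w) = bder 0 N and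
   q^(1)(w) is the column of bder 0 N0 selected by e_{J}.  Along the backward
   trajectory of j, the diagonal entry of bder 0 n collects, for each factor
   A = A_{-m}, a sum of column entries of f(A) over a fibre of a non-constant
   map; the sign condition on f makes each such sum negative unless f(A) = 0.
   So q^(1)(w) = 0 iff f vanishes on A_{-1}, ..., A_{-N_0^-}, as soon as some
   map beyond N_0^- is constant.

   The exceptional set is the union over M of the events "A_{-M}, A_{-M-1},
   ... are all non-constant"; under the uniform product measure n such
   coordinates have probability at most (card_nc / #|M|)^n with card_nc < #|M|,
   so each event, hence the union, is null. *)

Section MapMatrices.
Variables (R : realType) (k : nat).
Implicit Types (A B : Mt k) (X : 'M[R]_k).

Lemma mulmx_mat X A i j : (X *m mat A) i j = X i (A j).
Proof.
rewrite !mxE (bigD1 (A j)) //= !mxE eqxx mulr1 big1 ?addr0 // => l /negbTE hl.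
by rewrite !mxE hl mulr0.
Qed.

Lemma mat_comp A B : (mat A *m mat B : 'M[R]_k) = mat [ffun x => A (B x)].
Proof. by apply/matrixP => i j; rewrite mulmx_mat !mxE ffunE. Qed.

Lemma mulmx_evec X j i c : (X *m evec j) i c = X i j.
Proof.
rewrite !mxE (bigD1 j) //= !mxE eqxx mulr1 big1 ?addr0 // => l /negbTE hl.
by rewrite !mxE hl mulr0.
Qed.

Lemma mat_evec A j : (mat A *m evec j : 'cV[R]_k) = evec (A j).
Proof. by apply/matrixP => i c; rewrite mulmx_evec !mxE. Qed.

Lemma e1_evec (i0 : 'I_k) : val i0 = 0%N -> (e1 : 'cV[R]_k) = evec i0.
Proof.
move=> h0; apply/matrixP => i c; rewrite !mxE -h0.
by congr (_%:R); apply/eqP/eqP => [/val_inj|->].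
Qed.

Lemma rank_mat_const A (c : 'I_k) :
  (forall x, A x = c) -> \rank (mat A : 'M[R]_k) = 1%N.
Proof.
move=> hA.
have -> : (mat A : 'M[R]_k) = (evec c : 'M[R]_(k, 1)) *m const_mx 1.
  by apply/matrixP => i j; rewrite !mxE big_ord1 !mxE mulr1 hA.
apply/eqP; rewrite eqn_leq; apply/andP; split.
  exact: leq_trans (mxrankM_maxl _ _) (rank_leq_col _).
rewrite lt0n mxrank_eq0; apply/negP => /eqP /matrixP /(_ c c).
by rewrite !mxE big_ord1 !mxE eqxx mulr1 => /eqP; rewrite oner_eq0.
Qed.

End MapMatrices.

Fixpoint bmap {k : nat} (w : Omega k) (n : nat) : Mt k :=
  match n with
  | 0 => [ffun x => x]
  | n'.+1 => [ffun x => bmap w n' (w (- (n'.+1)%:Z) x)]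
  end.

Lemma Bprod_bmap (R : realType) k (w : Omega k) n :
  (Bprod n w : 'M[R]_k) = mat (bmap w n).
Proof.
elim: n => [|n IH] /=; first by apply/matrixP => i j; rewrite !mxE ffunE.
by rewrite IH mat_comp; congr mat; apply/ffunP => x; rewrite !ffunE.
Qed.

Definition nonconst {k : nat} (A : Mt k) : bool := [exists a, exists b, A a != A b].

Lemma nonconstPn k (A : Mt k) : ~~ nonconst A -> forall a b, A a = A b.
Proof.
move=> hA a b; apply/eqP; apply: contraNT hA => hab.
by apply/existsP; exists a; apply/existsP; exists b.
Qed.

Lemma nonconst_other k (A : Mt k) c : nonconst A -> exists l, A c != A l.
Proof.
case/existsP=> a /existsP [b hab].
by case: (eqVneq (A c) (A a)) => [->|]; [exists b | exists a].
Qed.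

Lemma nonconst_before_N0 (R : realType) k (hk : (2 <= k)%N) (w : Omega k) m :
  (m < @N0 R k w)%N -> nonconst (bmap w m).
Proof.
have k0 : (0 < k)%N by apply: leq_trans hk.
rewrite /N0; case: pselect => [hex|_]; last first.
  rewrite ltnS leqn0 => /eqP ->.
  by apply/existsP; exists (Ordinal k0); apply/existsP; exists (Ordinal hk); rewrite !ffunE.
case: ex_minnP => N _ hmin hm; apply: contraT => /nonconstPn hc.
have /hmin : \rank (@Bprod R k m w) == 1%N.
  by rewrite Bprod_bmap (@rank_mat_const _ _ _ (bmap w m (Ordinal k0))).
by rewrite leqNgt hm.
Qed.

Lemma bmap_const k (u : Omega k) i c :
  (forall x, u (- (i.+1)%:Z) x = c) -> forall n x, bmap u (i.+1 + n) x = bmap u i c.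
Proof.
move=> hc; elim=> [|n IH] x; first by rewrite addn0 /= ffunE hc.
by rewrite addnS /= ffunE IH.
Qed.

Lemma eJ_evec (R : realType) k (hk : (0 < k)%N) (u : Omega k) i :
  ~~ nonconst (u (- (i.+1)%:Z)) -> exists j, (eJ u : 'cV[R]_k) = evec j.
Proof.
move=> /nonconstPn hc; set x0 := Ordinal hk.
set v0 : 'cV[R]_k := evec (bmap u i (u (- (i.+1)%:Z) x0)).
have Bv0 n : (i.+1 <= n)%N -> (Bprod n u *m e1 : 'cV[R]_k) = v0.
  move=> hn; rewrite Bprod_bmap (@e1_evec _ _ x0) // mat_evec -(subnKC hn).
  by rewrite (@bmap_const _ _ _ (u (- (i.+1)%:Z) x0)).
exists (bmap u i (u (- (i.+1)%:Z) x0)); rewrite /eJ.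
case: xgetP => [v _ [n1 Hn1] | hnone]; last by case: (hnone v0); exists i.+1.
by rewrite -(Hn1 (maxn n1 i.+1)) ?leq_maxl // Bv0 // leq_maxr.
Qed.

Lemma cvg_mulmx_entries (R : realType) k (T : Type) (F : set_system T)
  {FF : Filter F} (X Y : T -> 'M[R]_k) (X0 Y0 : 'M[R]_k) :
  (forall i j, X t i j @[t --> F] --> X0 i j) ->
  (forall i j, Y t i j @[t --> F] --> Y0 i j) ->
  forall i j, (X t *m Y t) i j @[t --> F] --> (X0 *m Y0) i j.
Proof.
move=> hX hY i j; rewrite mxE; under eq_cvg do rewrite mxE.
by apply: cvg_big => // [|l _]; [exact: add_continuous | exact: cvgM].
Qed.

Section Perturbation.
Variables (R : realType) (k : nat) (f : Mt k -> 'M[R]_k) (w : Omega k).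

Definition pstep (c : R) (A : Mt k) : 'M[R]_k := mat A + c *: f A.

Fixpoint bpert (c : R) (n : nat) : 'M[R]_k :=
  match n with
  | 0 => 1%:M
  | n'.+1 => bpert c n' *m pstep c (w (- (n'.+1)%:Z))
  end.

(* Its difference quotient in c (it is exact, see [bpert_diff]); at c = 0 it
   is the derivative of the backward product. *)
Fixpoint bder (c : R) (n : nat) : 'M[R]_k :=
  match n with
  | 0 => 0
  | n'.+1 => bder c n' *m mat (w (- (n'.+1)%:Z))
             + bpert c n' *m f (w (- (n'.+1)%:Z))
  end.

Lemma bpert0 n : bpert 0 n = Bprod n w.
Proof. by elim: n => //= n ->; rewrite /pstep scale0r addr0. Qed.

Lemma bpert_diff c n : bpert c n - bpert 0 n = c *: bder c n.
Proof.
elim: n => [|n IH] /=; first by rewrite subrr scaler0.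
rewrite {2}/pstep scale0r addr0 /pstep mulmxDr -scalemxAr addrAC -mulmxBl IH.
by rewrite -scalemxAl scalerDr.
Qed.

Lemma bpert_cat eps a n :
  bpert (Num.min eps 1) (a + n)
  = bpert (Num.min eps 1) a *m Pcoc f eps n (shiftn (- (a + n)%:Z) w).
Proof.
elim: n a => [|n IH] a; first by rewrite addn0 /= mulmx1.
rewrite /= -addSnnS IH /= mulmxA; congr (_ *m _ *m _).
by rewrite /shiftn -[Peps f eps _]/(pstep _ _); congr (pstep _ (w _)); lia.
Qed.

Lemma Pcoc_bpert eps n :
  Pcoc f eps n (shiftn (- n%:Z) w) = bpert (Num.min eps 1) n.
Proof. by rewrite -[in RHS](add0n n) bpert_cat /= mul1mx. Qed.

Lemma bpert_bder_cvg n (c0 : R) :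
  (forall i j, bpert c n i j @[c --> c0] --> bpert c0 n i j) /\
  (forall i j, bder c n i j @[c --> c0] --> bder c0 n i j).
Proof.
elim: n => [|n [IHp IHd]] /=; first by split=> i j; exact: cvg_cst.
have hstep i j : pstep c (w (- (n.+1)%:Z)) i j @[c --> c0]
                 --> pstep c0 (w (- (n.+1)%:Z)) i j.
  rewrite !mxE; under eq_cvg do rewrite !mxE.
  by apply: cvgD; [exact: cvg_cst | apply: cvgM; [exact: cvg_id | exact: cvg_cst]].
split=> i j; first exact: cvg_mulmx_entries.
rewrite mxE; under eq_cvg do rewrite mxE.
apply: cvgD; apply: cvg_mulmx_entries => // i' j'; exact: cvg_cst.
Qed.

Lemma P1_bder N : P1 f N (shiftn (- N%:Z) w) = bder 0 N.
Proof.
apply/matrixP => i j; rewrite mxE; apply: cvg_lim => //.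
have [_ hD] := bpert_bder_cvg N 0.
apply: cvg_trans (cvg_at_right_filter (hD i j)); apply: near_eq_cvg; near=> h.
have h0 : 0 < h by near: h; exact: nbhs_right_gt.
have h1 : h < 1 by near: h; exact: nbhs_right_lt.
have := congr1 (fun M : 'M[R]_k => M i j) (bpert_diff h N).
rewrite /= !Pcoc_bpert (min_l (ltW h1)) (min_l ler01) !mxE => ->.
by rewrite mulrC mulKf // gt_eqF.
Unshelve. all: end_near.
Qed.

End Perturbation.

Lemma sum_block_neg (R : realDomainType) n (x : 'I_n -> R) (r : 'I_n)
  (S : pred 'I_n) :
  \sum_l x l = 0 -> (forall l, l != r -> 0 < x l) -> S r -> (exists l, ~~ S l) ->
  \sum_(l | S l) x l < 0.
Proof.
move=> hsum hpos Sr [l0 Sl0].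
have l0r : l0 != r by apply: contraNneq Sl0 => ->.
have out_pos : 0 < \sum_(l | ~~ S l) x l.
  rewrite (bigD1 l0) //=; apply: ltr_pwDl; first exact: hpos.
  by apply: sumr_ge0 => l /andP [Sl _]; apply/ltW/hpos; apply: contraNneq Sl => ->.
rewrite (bigID S) /= in hsum; lra.
Qed.

Section DerivativeSign.
Variables (R : realType) (k : nat) (f : Mt k -> 'M[R]_k) (w : Omega k).

Lemma bder_diag_step n j :
  bder f w 0 n.+1 (bmap w n.+1 j) j =
  bder f w 0 n (bmap w n (w (- (n.+1)%:Z) j)) (w (- (n.+1)%:Z) j)
  + \sum_(l | bmap w n (w (- (n.+1)%:Z) j) == bmap w n l) f (w (- (n.+1)%:Z)) l j.
Proof.
rewrite /= mxE mulmx_mat ffunE bpert0 Bprod_bmap mxE; congr (_ + _).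
rewrite [RHS]big_mkcond; apply: eq_bigr => l _.
by rewrite !mxE; case: eqP; rewrite ?mul1r ?mul0r.
Qed.

Lemma bder_vanish c n :
  (forall m, (1 <= m <= n)%N -> f (w (- m%:Z)) = 0) -> bder f w c n = 0.
Proof.
elim: n => [|n IH] hf /=; first by [].
rewrite IH => [|m /andP [m1 mn]]; last by rewrite hf // m1 ltnW.
by rewrite hf ?leqnn // mul0mx mulmx0 addr0.
Qed.

Hypothesis hf0 : forall (A : Mt k) (j : 'I_k), \sum_(i < k) f A i j = 0.
Hypothesis hfs : forall A : Mt k, f A = 0 \/
  forall i j : 'I_k, 0 < f A i j * (1 - 2 * (mat A : 'M[R]_k) i j).

Lemma bder_diag_sign n :
  (forall m, (m < n)%N -> nonconst (bmap w m)) ->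
  forall j, bder f w 0 n (bmap w n j) j <= 0 /\
    (bder f w 0 n (bmap w n j) j = 0 ->
     forall m, (1 <= m <= n)%N -> f (w (- m%:Z)) = 0).
Proof.
elim: n => [|n IH] hnc j.
  by rewrite /= mxE; split => // _ m /andP [m1 /(leq_trans m1)].
rewrite bder_diag_step; set A := w (- (n.+1)%:Z).
have [IH1 IH2] := IH (fun m hm => hnc m (ltnW hm)) (A j).
case: (hfs A) => [fA0 | hsgn].
  rewrite big1 => [|l _]; last by rewrite fA0 mxE.
  rewrite addr0; split => // d0 m /andP [m1]; rewrite leq_eqVlt => /orP [/eqP -> //|].
  by rewrite ltnS => mn; apply: IH2; rewrite ?m1.
have neg : \sum_(l | bmap w n (A j) == bmap w n l) f A l j < 0.
  apply: (sum_block_neg (r := A j)) => //.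
  - by move=> l hl; have := hsgn l j; rewrite mxE (negbTE hl) mulr0 subr0 mulr1.
  - by have [l hl] := nonconst_other (A j) (hnc n (ltnSn n)); exists l.
by split=> [|h]; lra.
Qed.

End DerivativeSign.

Lemma q1_eq0P (R : realType) k (hk : (2 <= k)%N) (f : Mt k -> 'M[R]_k)
  (hf0 : forall (A : Mt k) (j : 'I_k), \sum_(i < k) f A i j = 0)
  (hfs : forall A : Mt k, f A = 0 \/
     forall i j : 'I_k, 0 < f A i j * (1 - 2 * (mat A : 'M[R]_k) i j))
  (w : Omega k) :
  (exists i, ~~ nonconst (w (- (@N0 R k w + i.+1)%:Z))) ->
  (q1 f w = 0 <-> forall m, (1 <= m <= @N0 R k w)%N -> f (w (- m%:Z)) = 0).
Proof.
move=> [i hi]; rewrite /q1 P1_bder; set N := @N0 R k w.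
have k0 : (0 < k)%N by apply: leq_trans hk.
have [j ->] : exists j, eJ (shiftn (- N%:Z) w) = evec j :> 'cV[R]_k.
  apply: (@eJ_evec R k k0 _ i).
  by rewrite /shiftn; congr (~~ nonconst (w _)) : hi; lia.
split=> [hq | hf]; last by rewrite bder_vanish ?mul0mx.
have [_] := bder_diag_sign hf0 hfs (@nonconst_before_N0 R k hk w) j; apply.
by have := congr1 (fun v : 'cV[R]_k => v (bmap w N j) 0) hq; rewrite mulmx_evec mxE.
Qed.

Lemma measure_bigsetU_le d (T : measurableType d) (R : realType)
  (mu : {measure set T -> \bar R}) (I : Type) (r : seq I) (F : I -> set T) (x : R) :
  (forall i, measurable (F i)) -> (forall i, (mu (F i) <= x%:E)%E) ->
  (mu (\big[setU/set0]_(i <- r) F i) <= ((size r)%:R * x)%:E)%E.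
Proof.
move=> mF hx; elim: r => [|a r IH]; first by rewrite big_nil measure0 mul0r.
rewrite big_cons; apply: le_trans (measureU2 _ (mF a) (bigsetU_measurable _ _)) _.
  by move=> i _; exact: mF.
by rewrite /= -add1n natrD mulrDl mul1r EFinD leeD.
Qed.

Lemma le_geometric_eq0 (R : realType) (x : \bar R) (r : R) :
  (0 <= x)%E -> 0 <= r < 1 -> (forall n, (x <= (r ^+ n)%:E)%E) -> x = 0%E.
Proof.
move=> x0 /andP [r0 r1] hx; case: x x0 hx => [x| |] x0 hx; last by [].
  have x0' : 0 <= x by rewrite -lee_fin.
  have : x <= 0.
    have hc : (GRing.exp r : R ^nat) @ \oo --> 0 by apply: cvg_expr; rewrite ger0_norm.
    apply: (closed_cvg [set y | x <= y] (@closed_ge R x) _ 0 hc).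
    by near=> n; rewrite /= -lee_fin; exact: hx.
  by move=> hx0; congr EFin; apply/eqP; rewrite eq_le hx0 x0'.
by have := hx 0%N; rewrite leye_eq.
Unshelve. all: end_near.
Qed.

Section NonconstantRuns.
Variables (R : realType) (k : nat) (mu : probability (OmegaT k) R).
Hypothesis hmu : is_uniform_product mu.

Definition constr (t : seq int) (P : int -> pred (Mt k)) : set (OmegaT k) :=
  [set w : OmegaT k | forall z, z \in t -> P z (w z)].

Lemma constr_measurable t P : measurable (constr t P).
Proof.
have coord z (Q : pred (Mt k)) : measurable [set w : OmegaT k | Q (w z)].
  have -> : [set w : OmegaT k | Q (w z)] =
      \big[setU/set0]_(a <- enum Q) [set w : OmegaT k | w z = a].
    rewrite -bigcup_seq; apply/seteqP; split => w /=.
      by move=> hQ; exists (w z); rewrite //= mem_enum.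
    by move=> [a /= + ->]; rewrite mem_enum.
  apply: bigsetU_measurable => a _; apply: sub_sigma_algebra; by exists z, a.
elim: t => [|z t IH].
  by have -> : constr [::] P = setT by apply/seteqP; split => w //= _ z.
have -> : constr (z :: t) P = [set w : OmegaT k | P z (w z)] `&` constr t P.
  apply/seteqP; split => w /=.
    by move=> h; split => [|y hy]; apply: h; rewrite ?mem_head // inE hy orbT.
  by move=> [h1 h2] y; rewrite inE => /orP [/eqP ->|]; [|exact: h2].
exact: measurableI.
Qed.

(* Number of non-constant maps; it is smaller than #|M| since constant maps
   exist. *)
Definition card_nc : nat := #|[pred A : Mt k | nonconst A]|.

Lemma card_nc_lt (hk : (0 < k)%N) : (card_nc < #|Mt k|)%N.
Proof.
rewrite /card_nc -(cardC [pred A : Mt k | nonconst A]) -[X in (X < _)%N]addn0.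
rewrite ltn_add2l; apply/card_gt0P; exists [ffun _ => Ordinal hk].
by rewrite !inE; apply/negP => /existsP [a /existsP [b]]; rewrite !ffunE eqxx.
Qed.

Lemma cylinder_nonconst_le (t : seq int) :
  forall (s : seq int) (a : int -> Mt k), uniq (s ++ t) ->
  (mu (constr s (fun z b => b == a z) `&` constr t (fun _ => @nonconst k))
   <= ((#|Mt k|%:R : R)^-1 ^+ size s * (card_nc%:R / #|Mt k|%:R) ^+ size t)%:E)%E.
Proof.
elim: t => [|z t IH] s a hu.
  have -> : constr s (fun z b => b == a z) `&` constr [::] (fun _ => @nonconst k)
            = [set w : OmegaT k | forall z, z \in s -> w z = a z].
    apply/seteqP; split => w /=; first by move=> [h _] y /h /eqP.
    by move=> h; split=> // y /h ->.
  by rewrite hmu ?expr0 ?mulr1 // -(cats0 s).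
pose a' b y := if y == z then b else a y.
have zs : z \notin s.
  by move: hu; rewrite cat_uniq => /and3P [_ /hasPn /(_ z (mem_head _ _))].
have hu' : uniq ((z :: s) ++ t) by move: hu; rewrite -[z :: t]cat1s uniq_catCA.
(* split according to the value b of the coordinate z *)
pose U := \big[setU/set0]_(b <- enum [pred A : Mt k | nonconst A])
  (constr (z :: s) (fun y x => x == a' b y) `&` constr t (fun _ => @nonconst k)).
have cover : constr s (fun z b => b == a z) `&` constr (z :: t) (fun _ => @nonconst k)
             `<=` U.
  move=> w /= [h1 h2]; rewrite /U -bigcup_seq.
  exists (w z); first by rewrite /= mem_enum inE h2 ?mem_head.
  split=> [y|y hy]; last by apply: h2; rewrite inE hy orbT.
  rewrite inE /a' => /orP [/eqP ->|hy]; first by rewrite eqxx.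
  by rewrite ifN ?h1 //; apply: contraNneq zs => <-.
have mU : measurable U.
  by apply: bigsetU_measurable => b _; apply: measurableI; exact: constr_measurable.
apply: le_trans (le_measure mu _ _ cover) _; rewrite ?inE //.
  by apply: measurableI; exact: constr_measurable.
apply: le_trans (measure_bigsetU_le _ _ (fun b => IH _ (a' b) hu')) _.
  by move=> b; apply: measurableI; exact: constr_measurable.
rewrite -cardE lee_fin -/card_nc /= !exprS le_eqVlt; apply/orP; left; apply/eqP.
by ring.
Qed.

Definition nc_tail (M : nat) : set (OmegaT k) :=
  [set w : OmegaT k | forall i : nat, nonconst (w (- (M + i)%:Z))].

Lemma nc_tail_measurable M : measurable (nc_tail M).
Proof.
have -> : nc_tail M = \bigcap_i constr [:: - (M + i)%:Z] (fun _ => @nonconst k).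
  apply/seteqP; split => w /= h i; first by move=> _ z; rewrite inE => /eqP ->.
  by apply: (h i I); rewrite mem_head.
by apply: bigcapT_measurable => i; exact: constr_measurable.
Qed.

(* Non-constant maps have probability card_nc / #|M| < 1 at each site, so an
   infinite run of them is null. *)
Lemma nc_tail_null (hk : (0 < k)%N) M : mu (nc_tail M) = 0%E.
Proof.
have c0 : (0 < #|Mt k|%:R :> R) by rewrite ltr0n (leq_ltn_trans _ (card_nc_lt hk)).
apply: (@le_geometric_eq0 _ _ (card_nc%:R / #|Mt k|%:R)) => // [|n].
  by rewrite divr_ge0 ?ler0n //= ltr_pdivrMr // mul1r ltr_nat card_nc_lt.
pose t := [seq - (M + i)%:Z | i <- iota 0 n].
have ut : uniq ([::] ++ t) by rewrite map_inj_uniq ?iota_uniq // => i j; lia.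
have := @cylinder_nonconst_le t [::] (fun _ => [ffun x => x]) ut.
rewrite expr0 mul1r size_map size_iota; apply: le_trans; apply: le_measure.
- by rewrite inE; exact: nc_tail_measurable.
- by rewrite inE; apply: measurableI; exact: constr_measurable.
by move=> w /= hw; split=> // z /mapP [i _ ->].
Qed.

End NonconstantRuns.

(* The null set is the union of the events [nc_tail M]; off it, some map beyond
   N_0^-(w) is constant and [q1_eq0P] applies. *)
Theorem proposition6p2 (R : realType) (k : nat) (hk : (2 <= k)%N)
  (f : Mt k -> 'M[R]_k)
  (hf0 : forall (A : Mt k) (j : 'I_k), \sum_(i < k) f A i j = 0)
  (hfn : forall A : Mt k, mxnorm1 (f A) <= 1)
  (hfs : forall A : Mt k, f A = 0 \/
     forall i j : 'I_k, 0 < f A i j * (1 - 2 * (mat A : 'M[R]_k) i j))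
  (mu : probability (OmegaT k) R) (hmu : is_uniform_product mu) :
  exists Nul : set (OmegaT k),
    measurable Nul /\ mu Nul = 0%E /\
    forall w : OmegaT k, ~ Nul w ->
      (q1 f w = 0 <->
       forall m : nat, (1 <= m <= @N0 R k w)%N -> f (w (- (m%:Z))) = 0).
Proof.
have k0 : (0 < k)%N by apply: leq_trans hk.
have mtail M : measurable (@nc_tail k M) by exact: nc_tail_measurable.
exists (\bigcup_M nc_tail M); split; first exact: bigcupT_measurable.
split.
  apply/negligibleP; first exact: bigcupT_measurable.
  by apply: negligible_bigcup => M; apply/negligibleP => //; exact: nc_tail_null.
move=> w w_tail; apply: q1_eq0P => //.
apply: contrapT => no_const; apply: w_tail; exists (@N0 R k w).+1 => // i.
by apply: contrapT => /negP hi; apply: no_const; exists i; rewrite -addSnnS.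
Qed.
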